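(* Let $A_1,\dots,A_5$ be five points in the plane, with all subscripts taken modulo $5$, and assume the configuration is nondegenerate, in the sense that every line, intersection point and circle described below exists and is well defined. For $i=1,\dots,5$ define: - $B_{i+3}$ = the intersection point of the lines $A_iA_{i+1}$ and $A_{i+2}A_{i+3}$; - $K_{i+2}$ = the center of the circumcircle of triangle $A_iA_{i+1}B_{i+2}$; - $C_{i+1}$ = the second intersection point (other than $A_{i+1}$) of the circumcircles of triangles $A_iA_{i+1}B_{i+2}$ and $A_{i+1}A_{i+2}B_{i+3}$; - $L_i$ = the center of the circumcircle of triangle $C_{i+1}B_{i+2}B_{i+3}$. Assume that the five points $B_1,\dots,B_5$ lie on a circle with center $O$. The five points $C_1,\dots,C_5$ lie on a circle (Miquel's pentagram theorem); let $J$ be its center. The five lines $K_iL_i$, $i=1,\dots,5$, pass through a common point $X$. Then the points $O$, $J$, $X$ are collinear.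
   Context: Points are in the Euclidean plane; all indices are read modulo 5. *)

(* Points of the Euclidean plane are pairs of coordinates
   in a real field R (R^2); all statements are polynomial, so any
   realFieldType (in particular the reals) is covered. *)
From HB Require Import structures.
From mathcomp Require Import all_boot all_order all_algebra.
Set Implicit Arguments. Unset Strict Implicit. Unset Printing Implicit Defensive.
Import Order.TTheory GRing.Theory Num.Theory.
Local Open Scope ring_scope.

Definition point (R : realFieldType) := (R * R)%type.

Definition dist2 (R : realFieldType) (p q : point R) : R :=
  (p.1 - q.1) ^+ 2 + (p.2 - q.2) ^+ 2.

Definition collinear (R : realFieldType) (p q r : point R) : Prop :=
  (q.1 - p.1) * (r.2 - p.2) - (q.2 - p.2) * (r.1 - p.1) = 0.

Definition parallel (R : realFieldType) (a b c d : point R) : Prop :=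
  (b.1 - a.1) * (d.2 - c.2) - (b.2 - a.2) * (d.1 - c.1) = 0.

Definition nx (i : 'I_5) (k : nat) : 'I_5 := inZp (i + k).

From HB Require Import structures.
From mathcomp Require Import all_boot all_order all_algebra.
From mathcomp.real_closed Require Import complex.
From mathcomp Require Import ring.
Set Implicit Arguments. Unset Strict Implicit. Unset Printing Implicit Defensive.
Import Order.TTheory GRing.Theory Num.Theory.
Local Open Scope ring_scope.

(* Put the origin at O and use isotropic coordinates z = x + iy, w = conj(z) / rho,
   where rho is the squared radius of the circle through the B_i: squared distances
   become rho (z - z')(w - w'), collinearity a bilinear determinant, and every B_i
   satisfies w = 1 / z.  Writing b_i for z(B_i), each point of the figure is then
   forced, by a uniqueness argument, to have explicit rational coordinates in
   b_0, ..., b_4: the A_i as intersections of chords, the K_i and L_i as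
   circumcentres, the C_i as second intersections of circles.  A computation shows
   that all C_i are equidistant from J = (P_z, P_w) / Q_J and that every line K_iL_i
   passes through X = (P_z, P_w) / Q_X, for cyclically symmetric polynomials
   P_z, P_w, Q_J, Q_X in the b_i.  So J and X are proportional, i.e. collinear with
   the origin O.  The nondegeneracy hypotheses give Q_J, Q_X <> 0 and the
   distinctness of the B_i. *)

Lemma nx_val (i : 'I_5) k : val (nx i k) = ((i + k) %% 5)%N.
Proof. by []. Qed.

Lemma nxA (i : 'I_5) a b : nx (nx i a) b = nx i ((a + b) %% 5)%N.
Proof. by apply: val_inj; rewrite !nx_val modnDml modnDmr addnA. Qed.

Lemma nx0 (i : 'I_5) : nx i 0 = i.
Proof. by apply: val_inj; rewrite nx_val addn0 modn_small. Qed.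

Lemma nxS (i : 'I_5) k : nx i k.+1 = nx (nx i k) 1.
Proof. by apply: val_inj; rewrite !nx_val modnDml -addnA addn1. Qed.

Lemma nx_ord0 (j : 'I_5) : nx ord0 j = j.
Proof. by apply: val_inj; rewrite nx_val add0n modn_small. Qed.

Lemma nx_neq (j : 'I_5) a b : (a < 5)%N -> (b < 5)%N -> a != b -> nx j a != nx j b.
Proof.
move=> ha hb hab; apply/negP => /eqP/(congr1 val); rewrite !nx_val => /eqP.
by rewrite eqn_modDl !modn_small // (negbTE hab).
Qed.

Lemma ord5_neq_cases (a c : 'I_5) : a != c ->
  [\/ c = nx a 1, c = nx a 2, a = nx c 1 | a = nx c 2].
Proof.
have key (x y : 'I_5) : x != y -> [|| y == nx x 1, y == nx x 2, x == nx y 1 | x == nx y 2].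
  by case: x y => [[|[|[|[|[|x]]]]] hx] [[|[|[|[|[|y]]]]] hy].
by move/key/or4P => [] /eqP; [constructor 1 | constructor 2 | constructor 3 | constructor 4].
Qed.

Ltac is_numeral x := lazymatch x with O => idtac | S ?p => is_numeral p end.
Ltac reduce_indices := repeat (match goal with
 | |- context[((?x + ?y) %% 5)%N] => is_numeral x; is_numeral y;
     let v := eval vm_compute in ((x + y) %% 5)%N in change ((x + y) %% 5)%N with v
 | H : context[((?x + ?y) %% 5)%N] |- _ => is_numeral x; is_numeral y;
     let v := eval vm_compute in ((x + y) %% 5)%N in change ((x + y) %% 5)%N with v in H
 end).

Ltac nonzero := match goal with
 | |- is_true (?e != 0) =>
   solve [ assumption
         | (apply: mulf_neq0; nonzero)
         | (apply: invr_neq0; nonzero)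
         | match goal with H : is_true (?e' != 0) |- _ =>
             first [ (rewrite (_ : e = e'); [exact H | ring])
                   | (rewrite (_ : e = - e'); [by rewrite oppr_eq0 | ring]) ]
           end ]
 end.
Ltac field_side := repeat (apply/andP; split); nonzero.

Section IsotropicAlgebra.
Variable F : fieldType.

Definition icross (z1 w1 z2 w2 z3 w3 : F) := (z2 - z1) * (w3 - w1) - (w2 - w1) * (z3 - z1).
Definition idist (z1 w1 z2 w2 : F) := (z1 - z2) * (w1 - w2).

Lemma icross_eq12 (z w z' w' : F) : icross z w z w z' w' = 0.
Proof. rewrite /icross; ring. Qed.
Lemma icross_eq13 (z w z' w' : F) : icross z w z' w' z w = 0.
Proof. rewrite /icross; ring. Qed.

Lemma icross0_scale (a c s t : F) : s != 0 -> t != 0 -> icross 0 0 (a / s) (c / s) (a / t) (c / t) = 0.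
Proof. by move=> *; rewrite /icross; field; field_side. Qed.

Lemma on_chord (a a' p q : F) : p != q -> p != 0 -> q != 0 ->
  icross a a' p p^-1 q q^-1 = 0 -> a + p * q * a' = p + q.
Proof.
move=> hpq hp hq H.
have E : icross a a' p p^-1 q q^-1 = (p - q) / (p * q) * (p + q - p * q * a' - a).
  by rewrite /icross; field; field_side.
move: H; rewrite E => /eqP; rewrite mulf_eq0 => /orP[|/eqP H].
  by rewrite mulf_eq0 invr_eq0 mulf_eq0 subr_eq0 (negbTE hpq) (negbTE hp) (negbTE hq).
by apply/eqP; rewrite -subr_eq0; apply/eqP; rewrite -oppr0 -H; ring.
Qed.

Definition chord_meet_z (p q r s : F) := (p * q * (r + s) - r * s * (p + q)) / (p * q - r * s).
Definition chord_meet_w (p q r s : F) := (p + q - r - s) / (p * q - r * s).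

Lemma chords_meet (a a' p q r s : F) : p != r -> p != s -> q != r -> q != s ->
  a + p * q * a' = p + q -> a + r * s * a' = r + s ->
  [/\ p * q - r * s != 0, a = chord_meet_z p q r s & a' = chord_meet_w p q r s].
Proof.
move=> hpr hps hqr hqs h1 h2.
have hne : p * q - r * s != 0.
  apply/negP => /eqP e.
  have e' : r * s = p * q by apply/eqP; rewrite eq_sym -subr_eq0 e.
  have e2 : p + q - (r + s) = 0 by rewrite -h1 -h2 e'; ring.
  have : (p - r) * (p - s) = 0.
    rewrite (_ : (p - r) * (p - s) = p * (p + q - (r + s)) - (p * q - r * s)); last by ring.
    by rewrite e2 e mulr0 subr0.
  by move/eqP; rewrite mulf_eq0 !subr_eq0 (negbTE hpr) (negbTE hps).
have ha' : a' = chord_meet_w p q r s.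
  rewrite /chord_meet_w; apply: (mulIf hne); rewrite mulfVK //.
  apply/eqP; rewrite -subr_eq0; apply/eqP.
  rewrite (_ : a' * (p * q - r * s) - (p + q - r - s) = (a + p * q * a' - (p + q)) - (a + r * s * a' - (r + s))); last by ring.
  by rewrite h1 h2 !subrr.
split => //.
have -> : a = p + q - p * q * a' by rewrite -h1; ring.
by rewrite ha' /chord_meet_w /chord_meet_z; field.
Qed.

Lemma equidistant_uniq (p p' q q' s s' x x' y y' : F) : icross p p' q q' s s' != 0 ->
  idist x x' p p' = idist x x' s s' -> idist x x' q q' = idist x x' s s' ->
  idist y y' p p' = idist y y' s s' -> idist y y' q q' = idist y y' s s' -> x = y /\ x' = y'.
Proof.
rewrite /idist => hc h1 h2 h3 h4.
have e1 : (x - y) * (s' - p') + (x' - y') * (s - p) = 0.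
  transitivity (((x - p) * (x' - p') - (x - s) * (x' - s')) - ((y - p) * (y' - p') - (y - s) * (y' - s'))); first by ring.
  by rewrite h1 h3 !subrr.
have e2 : (x - y) * (s' - q') + (x' - y') * (s - q) = 0.
  transitivity (((x - q) * (x' - q') - (x - s) * (x' - s')) - ((y - q) * (y' - q') - (y - s) * (y' - s'))); first by ring.
  by rewrite h2 h4 !subrr.
have d1 : (x - y) * icross p p' q q' s s' = 0.
  transitivity ((s - p) * ((x - y) * (s' - q') + (x' - y') * (s - q)) - (s - q) * ((x - y) * (s' - p') + (x' - y') * (s - p))); first by rewrite /icross; ring.
  by rewrite e1 e2 !mulr0 subrr.
have d2 : (x' - y') * icross p p' q q' s s' = 0.
  transitivity ((s' - q') * ((x - y) * (s' - p') + (x' - y') * (s - p)) - (s' - p') * ((x - y) * (s' - q') + (x' - y') * (s - q))); first by rewrite /icross; ring.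
  by rewrite e1 e2 !mulr0 subrr.
move/eqP: d1; rewrite mulf_eq0 (negbTE hc) orbF subr_eq0 => /eqP ->.
by move/eqP: d2; rewrite mulf_eq0 (negbTE hc) orbF subr_eq0 => /eqP ->.
Qed.

Lemma equidistant_homog (p p' q q' s s' x x' X X' T : F) : icross p p' q q' s s' != 0 ->
  idist x x' p p' = idist x x' s s' -> idist x x' q q' = idist x x' s s' ->
  X * (s' - p') + X' * (s - p) + T * (p * p' - s * s') = 0 ->
  X * (s' - q') + X' * (s - q) + T * (q * q' - s * s') = 0 ->
  X' != 0 -> [/\ T != 0, x = X / T & x' = X' / T].
Proof.
rewrite /idist => hc h1 h2 e1 e2 hX'.
have hT : T != 0.
  apply/negP => /eqP hT; move: e1 e2; rewrite hT !mul0r !addr0 => e1 e2.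
  have : X' * icross p p' q q' s s' = 0.
    transitivity ((s' - q') * (X * (s' - p') + X' * (s - p)) - (s' - p') * (X * (s' - q') + X' * (s - q))); first by rewrite /icross; ring.
    by rewrite e1 e2 !mulr0 subrr.
  by move/eqP; rewrite mulf_eq0 (negbTE hX') (negbTE hc).
have f1 : (x * T - X) * (s' - p') + (x' * T - X') * (s - p) = 0.
  transitivity (T * ((x - p) * (x' - p') - (x - s) * (x' - s')) + (X * (s' - p') + X' * (s - p) + T * (p * p' - s * s')) * (-1)); first by ring.
  by rewrite h1 e1 subrr mulr0 mul0r addr0.
have f2 : (x * T - X) * (s' - q') + (x' * T - X') * (s - q) = 0.
  transitivity (T * ((x - q) * (x' - q') - (x - s) * (x' - s')) + (X * (s' - q') + X' * (s - q) + T * (q * q' - s * s')) * (-1)); first by ring.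
  by rewrite h2 e2 subrr mulr0 mul0r addr0.
have d1 : (x * T - X) * icross p p' q q' s s' = 0.
  transitivity ((s - p) * ((x * T - X) * (s' - q') + (x' * T - X') * (s - q)) - (s - q) * ((x * T - X) * (s' - p') + (x' * T - X') * (s - p))); first by rewrite /icross; ring.
  by rewrite f1 f2 !mulr0 subrr.
have d2 : (x' * T - X') * icross p p' q q' s s' = 0.
  transitivity ((s' - q') * ((x * T - X) * (s' - p') + (x' * T - X') * (s - p)) - (s' - p') * ((x * T - X) * (s' - q') + (x' * T - X') * (s - q))); first by rewrite /icross; ring.
  by rewrite f1 f2 !mulr0 subrr.
move/eqP: d1; rewrite mulf_eq0 (negbTE hc) orbF subr_eq0 => /eqP hx.
move/eqP: d2; rewrite mulf_eq0 (negbTE hc) orbF subr_eq0 => /eqP hx'.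
by split => //; [rewrite -hx | rewrite -hx']; rewrite mulfK.
Qed.

(* The common chord [ac] is perpendicular to the line of centres; in isotropic
   coordinates this is a linear condition on [c]. *)
Lemma circles_meet_again (k k' l l' a a' c c' : F) : l - k != 0 -> l' - k' != 0 ->
  idist k k' c c' = idist k k' a a' -> idist l l' c c' = idist l l' a a' -> c != a ->
  (c - k) * (l' - k') = (a' - k') * (l - k) /\ (c' - k') * (l - k) = (a - k) * (l' - k').
Proof.
rewrite /idist => h1 h2 e1 e2 hca.
have E1 : (c - a) * (c' - a') + (c - a) * (a' - k') + (c' - a') * (a - k) = 0.
  transitivity ((k - c) * (k' - c') - (k - a) * (k' - a')); first by ring.
  by rewrite e1 subrr.
have E2 : (c - a) * (c' - a') + (c - a) * (a' - l') + (c' - a') * (a - l) = 0.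
  transitivity ((l - c) * (l' - c') - (l - a) * (l' - a')); first by ring.
  by rewrite e2 subrr.
have E3 : (c - a) * (l' - k') + (c' - a') * (l - k) = 0.
  transitivity (((c - a) * (c' - a') + (c - a) * (a' - k') + (c' - a') * (a - k)) - ((c - a) * (c' - a') + (c - a) * (a' - l') + (c' - a') * (a - l))); first by ring.
  by rewrite E1 E2 subrr.
have G : (c - a) * ((a' - k') * (l - k) - (c - k) * (l' - k')) = 0.
  transitivity ((l - k) * ((c - a) * (c' - a') + (c - a) * (a' - k') + (c' - a') * (a - k)) - (c - k) * ((c - a) * (l' - k') + (c' - a') * (l - k))); first by ring.
  by rewrite E1 E3 !mulr0 subrr.
move/eqP: G; rewrite mulf_eq0 subr_eq0 (negbTE hca) /= subr_eq0 => /eqP G.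
split; first by rewrite G.
apply/eqP; rewrite -subr_eq0; apply/eqP.
transitivity ((c - a) * (l' - k') + (c' - a') * (l - k) - ((c - k) * (l' - k') - (a' - k') * (l - k))); first by ring.
by rewrite E3 G subrr subr0.
Qed.

Lemma lines_meet_uniq (k1 k1' l1 l1' k2 k2' l2 l2' x x' y y' : F) :
  (l1 - k1) * (l2' - k2') - (l1' - k1') * (l2 - k2) != 0 ->
  icross k1 k1' l1 l1' x x' = 0 -> icross k2 k2' l2 l2' x x' = 0 ->
  icross k1 k1' l1 l1' y y' = 0 -> icross k2 k2' l2 l2' y y' = 0 -> x = y /\ x' = y'.
Proof.
rewrite /icross => hp h1 h2 h3 h4.
have e1 : (l1 - k1) * (x' - y') - (l1' - k1') * (x - y) = 0.
  transitivity (((l1 - k1) * (x' - k1') - (l1' - k1') * (x - k1)) - ((l1 - k1) * (y' - k1') - (l1' - k1') * (y - k1))); first by ring.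
  by rewrite h1 h3 subrr.
have e2 : (l2 - k2) * (x' - y') - (l2' - k2') * (x - y) = 0.
  transitivity (((l2 - k2) * (x' - k2') - (l2' - k2') * (x - k2)) - ((l2 - k2) * (y' - k2') - (l2' - k2') * (y - k2))); first by ring.
  by rewrite h2 h4 subrr.
have d1 : (x - y) * ((l1 - k1) * (l2' - k2') - (l1' - k1') * (l2 - k2)) = 0.
  transitivity ((l2 - k2) * ((l1 - k1) * (x' - y') - (l1' - k1') * (x - y)) - (l1 - k1) * ((l2 - k2) * (x' - y') - (l2' - k2') * (x - y))); first by ring.
  by rewrite e1 e2 !mulr0 subrr.
have d2 : (x' - y') * ((l1 - k1) * (l2' - k2') - (l1' - k1') * (l2 - k2)) = 0.
  transitivity ((l2' - k2') * ((l1 - k1) * (x' - y') - (l1' - k1') * (x - y)) - (l1' - k1') * ((l2 - k2) * (x' - y') - (l2' - k2') * (x - y))); first by ring.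
  by rewrite e1 e2 !mulr0 subrr.
move/eqP: d1; rewrite mulf_eq0 (negbTE hp) orbF subr_eq0 => /eqP ->.
by move/eqP: d2; rewrite mulf_eq0 (negbTE hp) orbF subr_eq0 => /eqP ->.
Qed.

Lemma scaled_center_idist (c c' D D' P P' Q S : F) : Q != 0 -> D != 0 -> D' != 0 ->
  (c * Q - P) * D = S * D' -> (c' * Q - P') * D' = S * D ->
  idist (P / Q) (P' / Q) c c' = S ^+ 2 / Q ^+ 2.
Proof.
move=> hQ hD hD' e1 e2.
have e1' : c * Q - P = S * D' / D by rewrite -e1 mulfK.
have e2' : c' * Q - P' = S * D / D' by rewrite -e2 mulfK.
transitivity ((c * Q - P) * (c' * Q - P') / Q ^+ 2); first by rewrite /idist; field; field_side.
by rewrite e1' e2'; field; field_side.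
Qed.

Lemma scaled_point_on_line (k k' l l' P P' Q lam : F) : Q != 0 ->
  P - k * Q = lam * (l - k) -> P' - k' * Q = lam * (l' - k') ->
  icross k k' l l' (P / Q) (P' / Q) = 0.
Proof.
move=> hQ e1 e2.
transitivity ((l - k) * (P' - k' * Q) / Q - (l' - k') * (P - k * Q) / Q); first by rewrite /icross; field; field_side.
by rewrite e1 e2; field; field_side.
Qed.

Lemma scaled_lines_denom_neq0 (k1 k1' l1 l1' k2 k2' l2 l2' P P' Q lam1 lam2 : F) :
  lam1 != 0 -> lam2 != 0 ->
  P - k1 * Q = lam1 * (l1 - k1) -> P' - k1' * Q = lam1 * (l1' - k1') ->
  P - k2 * Q = lam2 * (l2 - k2) -> P' - k2' * Q = lam2 * (l2' - k2') ->
  (l1 - k1) * (l2' - k2') - (l1' - k1') * (l2 - k2) != 0 -> Q != 0.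
Proof.
move=> hl1 hl2 e1 e2 e3 e4 hp; apply/negP => /eqP hQ.
move: e1 e2 e3 e4; rewrite hQ !mulr0 !subr0 => e1 e2 e3 e4.
have : ((l1 - k1) * (l2' - k2') - (l1' - k1') * (l2 - k2)) * (lam1 * lam2) = 0.
  transitivity ((lam1 * (l1 - k1)) * (lam2 * (l2' - k2')) - (lam1 * (l1' - k1')) * (lam2 * (l2 - k2))); first by ring.
  by rewrite -e1 -e2 -e3 -e4; ring.
by move/eqP; rewrite mulf_eq0 (negbTE hp) mulf_eq0 (negbTE hl1) (negbTE hl2).
Qed.

Lemma concyclic_denom_neq0 (c1 c1' c2 c2' c3 c3' D1 D2 D3 D1' D2' D3' P Q S g2 g3 : F) :
  D1 != 0 -> D2 != 0 -> D3 != 0 -> D1' != 0 -> D2' != 0 -> D3' != 0 ->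
  (c2 - c1) * (D1 * D2) = S * g2 -> (c2' - c1') * (D1' * D2') = - (S * g2) ->
  (c3 - c1) * (D1 * D3) = S * g3 -> (c3' - c1') * (D1' * D3') = - (S * g3) ->
  (c2 * Q - P) * D2 = S * D2' -> (c3 * Q - P) * D3 = S * D3' ->
  icross c1 c1' c2 c2' c3 c3' != 0 -> Q != 0.
Proof.
move=> ? ? ? ? ? ? h2 h2' h3 h3' e2 e3 hcr.
apply/negP => /eqP hQ.
have E : icross c1 c1' c2 c2' c3 c3' * (D1 * D2 * D3 * D1' * D2' * D3') =
  ((c2 - c1) * (D1 * D2)) * ((c3' - c1') * (D1' * D3')) * D2' * D3
  - ((c2' - c1') * (D1' * D2')) * ((c3 - c1) * (D1 * D3)) * D2 * D3'.
  by rewrite /icross; ring.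
rewrite h2 h2' h3 h3' in E.
have s2 : S * D2' = - P * D2 by rewrite -e2 hQ; ring.
have s3 : S * D3' = - P * D3 by rewrite -e3 hQ; ring.
have E' : (S * g2) * - (S * g3) * D2' * D3 - - (S * g2) * (S * g3) * D2 * D3'
  = - (S * g2 * g3) * ((S * D2') * D3 - D2 * (S * D3')) by ring.
rewrite E' s2 s3 in E.
have : icross c1 c1' c2 c2' c3 c3' * (D1 * D2 * D3 * D1' * D2' * D3') = 0 by rewrite E; ring.
by move/eqP; rewrite mulf_eq0 (negbTE hcr) /=; apply/negP; nonzero.
Qed.

End IsotropicAlgebra.

(* With b_k := z(B_{j+k}), hence w(B_{j+k}) = 1 / b_k, the points of the figure are
   A_j = chord_meet (b_0, b_2, b_1, b_3), K_j = K (b_0, b_3, b_2, b_4, b_1),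
   C_j = C_num / C_den (b_4, b_0, b_1, b_2, b_3) and L_j = L (b_1, b_2, b_3, b_4),
   where chord_meet p q r s is the meet of the chords pq and rs of the unit circle. *)
Section PentagramFormulas.
Variable F : fieldType.

Definition K_z (v x y p q : F) := v - v * x * y * (v - p) * (v - q) / ((v * x - p * q) * (v * y - p * q)).
Definition K_w (v x y p q : F) := v^-1 - (v - p) * (v - q) * p * q / (v * (v * x - p * q) * (v * y - p * q)).
Definition C_znum (b0 b1 b2 b3 b4 : F) := b0 * b1 * b2 * b3 - b0 * b1 * b2 * b4 + b0 * b1 * b3 * b4 - b0 * b2 * b3 * b4 - b1 * b2 * b3 * b3 + b2 * b2 * b3 * b4.
Definition C_zden (b0 b1 b2 b3 b4 : F) := b0 * b1 * b3 - b0 * b2 * b4 - b1 * b2 * b4 - b1 * b3 * b3 + b1 * b3 * b4 + b2 * b2 * b4.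
Definition C_wnum (b0 b1 b2 b3 b4 : F) := b0 * b1 * b3 - b0 * b2 * b4 - b1 * b2 * b3 + b2 * b2 * b3 - b2 * b3 * b3 + b2 * b3 * b4.
Definition C_wden (b0 b1 b2 b3 b4 : F) := b0 * b1 * b3 * b3 + b0 * b2 * b2 * b3 - b0 * b2 * b2 * b4 - b0 * b2 * b3 * b3 - b1 * b2 * b3 * b3 + b2 * b2 * b3 * b4.
Definition L_z (b1 b2 b3 b4 : F) := b2 * b3 * (b1 * b3 - b2 * b4) / (b1 * b3 * b3 - b2 * b2 * b4).
Definition L_w (b1 b2 b3 b4 : F) := (b1 * b3 - b2 * b4) / (b1 * b3 * b3 - b2 * b2 * b4).

Definition cyc_sum (t : F -> F -> F -> F -> F -> F) (b0 b1 b2 b3 b4 : F) :=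
  t b0 b1 b2 b3 b4 + t b1 b2 b3 b4 b0 + t b2 b3 b4 b0 b1 + t b3 b4 b0 b1 b2 + t b4 b0 b1 b2 b3.

Definition P_z := cyc_sum (fun b0 b1 b2 b3 b4 => b1 * b1 * b2 * b3 * b3 * b4 - b1 * b2 * b2 * b3 * b4 * b4).
Definition P_w := cyc_sum (fun b0 b1 b2 b3 b4 => b0 * b0 * (b1 * b3 - b2 * b4)).
Definition Q_J := cyc_sum (fun b0 b1 b2 b3 b4 => b1 * b4 * (b2 + b3) * (b1 * b3 - b2 * b4)).
Definition Q_X := cyc_sum (fun b0 b1 b2 b3 b4 => b1 * b4 * (b1 * b3 * b3 - b2 * b2 * b4)).
Definition S_J b0 b1 b2 b3 b4 := Q_J b0 b1 b2 b3 b4 - Q_X b0 b1 b2 b3 b4.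

Definition cyc_invariant (f : F -> F -> F -> F -> F -> F) :=
  forall b0 b1 b2 b3 b4, f b1 b2 b3 b4 b0 = f b0 b1 b2 b3 b4.

Lemma cyc_sum_invariant t : cyc_invariant (cyc_sum t).
Proof. by move=> *; rewrite /cyc_sum; ring. Qed.

Lemma P_z_invariant : cyc_invariant P_z. Proof. exact: cyc_sum_invariant. Qed.
Lemma P_w_invariant : cyc_invariant P_w. Proof. exact: cyc_sum_invariant. Qed.
Lemma Q_J_invariant : cyc_invariant Q_J. Proof. exact: cyc_sum_invariant. Qed.
Lemma Q_X_invariant : cyc_invariant Q_X. Proof. exact: cyc_sum_invariant. Qed.

Lemma K_equidistant (b0 b1 b2 b3 b4 : F) : b0 != 0 -> b1 != 0 -> b2 != 0 -> b3 != 0 -> b4 != 0 ->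
  b3 * b0 - b4 * b1 != 0 -> b4 * b1 - b0 * b2 != 0 ->
  let k := K_z b0 b3 b2 b4 b1 in let k' := K_w b0 b3 b2 b4 b1 in
  idist k k' (chord_meet_z b3 b0 b4 b1) (chord_meet_w b3 b0 b4 b1) = idist k k' b0 b0^-1 /\
  idist k k' (chord_meet_z b4 b1 b0 b2) (chord_meet_w b4 b1 b0 b2) = idist k k' b0 b0^-1.
Proof. by cbv zeta => *; rewrite /K_z /K_w /chord_meet_z /chord_meet_w /idist; split; field; field_side. Qed.

Lemma K_diff (b0 b1 b2 b3 b4 : F) : b0 != 0 -> b1 != 0 -> b2 != 0 -> b3 != 0 -> b4 != 0 ->
  b4 * b1 - b0 * b2 != 0 -> b1 * b3 - b2 * b4 != 0 -> b0 * b2 - b1 * b3 != 0 ->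
  let d := (b4 * b1 - b0 * b2) * (b4 * b2 - b1 * b3) * (b0 * b2 - b1 * b3) in
  (K_w b2 b0 b4 b1 b3 - K_w b1 b4 b3 b0 b2) * d = (b1 - b2) * b4 * C_zden b4 b0 b1 b2 b3 /\
  (K_z b2 b0 b4 b1 b3 - K_z b1 b4 b3 b0 b2) * d = (b1 - b2) * b0 * b3 * C_wden b4 b0 b1 b2 b3.
Proof. by cbv zeta => *; rewrite /K_z /K_w /C_zden /C_wden; split; field; field_side. Qed.

Lemma C_second_meet (b0 b1 b2 b3 b4 : F) : b0 != 0 -> b1 != 0 -> b2 != 0 -> b3 != 0 -> b4 != 0 ->
  b4 * b1 - b0 * b2 != 0 -> b1 * b3 - b2 * b4 != 0 -> b0 * b2 - b1 * b3 != 0 ->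
  C_zden b4 b0 b1 b2 b3 != 0 -> C_wden b4 b0 b1 b2 b3 != 0 ->
  (C_znum b4 b0 b1 b2 b3 / C_zden b4 b0 b1 b2 b3 - K_z b1 b4 b3 b0 b2) * (K_w b2 b0 b4 b1 b3 - K_w b1 b4 b3 b0 b2)
   = (chord_meet_w b0 b2 b1 b3 - K_w b1 b4 b3 b0 b2) * (K_z b2 b0 b4 b1 b3 - K_z b1 b4 b3 b0 b2) /\
  (C_wnum b4 b0 b1 b2 b3 / C_wden b4 b0 b1 b2 b3 - K_w b1 b4 b3 b0 b2) * (K_z b2 b0 b4 b1 b3 - K_z b1 b4 b3 b0 b2)
   = (chord_meet_z b0 b2 b1 b3 - K_z b1 b4 b3 b0 b2) * (K_w b2 b0 b4 b1 b3 - K_w b1 b4 b3 b0 b2).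
Proof.
move=> *; rewrite /K_z /K_w /chord_meet_z /chord_meet_w /C_znum /C_zden /C_wnum /C_wden.
by split; field; field_side.
Qed.

Lemma L_center_eqs (b0 b1 b2 b3 b4 : F) : b0 != 0 -> b1 != 0 -> b2 != 0 -> b3 != 0 -> b4 != 0 ->
  C_zden b0 b1 b2 b3 b4 != 0 -> C_wden b0 b1 b2 b3 b4 != 0 ->
  let c := C_znum b0 b1 b2 b3 b4 / C_zden b0 b1 b2 b3 b4 in
  let c' := C_wnum b0 b1 b2 b3 b4 / C_wden b0 b1 b2 b3 b4 in
  let X := b2 * b3 * (b1 * b3 - b2 * b4) in let X' := b1 * b3 - b2 * b4 in
  let T := b1 * b3 * b3 - b2 * b2 * b4 in
  X * (b3^-1 - c') + X' * (b3 - c) + T * (c * c' - b3 * b3^-1) = 0 /\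
  X * (b3^-1 - b2^-1) + X' * (b3 - b2) + T * (b2 * b2^-1 - b3 * b3^-1) = 0.
Proof.
cbv zeta => *; rewrite /C_znum /C_wnum /C_zden /C_wden.
by split; field; field_side.
Qed.

Lemma C_sub_J (b0 b1 b2 b3 b4 : F) :
  let S := S_J b0 b1 b2 b3 b4 in let Q := Q_J b0 b1 b2 b3 b4 in
  C_znum b0 b1 b2 b3 b4 * Q - P_z b0 b1 b2 b3 b4 * C_zden b0 b1 b2 b3 b4 = S * C_wden b0 b1 b2 b3 b4 /\
  C_wnum b0 b1 b2 b3 b4 * Q - P_w b0 b1 b2 b3 b4 * C_wden b0 b1 b2 b3 b4 = S * C_zden b0 b1 b2 b3 b4.
Proof. cbv zeta; rewrite /S_J /C_znum /C_wnum /Q_J /P_z /P_w /C_zden /Q_X /C_wden /cyc_sum; split; ring. Qed.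

Lemma C_sub (b0 b1 b2 b3 b4 : F) :
  let S := S_J b0 b1 b2 b3 b4 in
  [/\ C_znum b0 b1 b2 b3 b4 * C_zden b4 b0 b1 b2 b3 - C_znum b4 b0 b1 b2 b3 * C_zden b0 b1 b2 b3 b4
      = S * ((b1 - b2) * (b2 - b3)),
   C_wnum b0 b1 b2 b3 b4 * C_wden b4 b0 b1 b2 b3 - C_wnum b4 b0 b1 b2 b3 * C_wden b0 b1 b2 b3 b4
      = - (S * ((b1 - b2) * (b2 - b3))),
   C_znum b1 b2 b3 b4 b0 * C_zden b4 b0 b1 b2 b3 - C_znum b4 b0 b1 b2 b3 * C_zden b1 b2 b3 b4 b0
      = - (S * ((b1 - b4) * (b2 - b3))) &
   C_wnum b1 b2 b3 b4 b0 * C_wden b4 b0 b1 b2 b3 - C_wnum b4 b0 b1 b2 b3 * C_wden b1 b2 b3 b4 b0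
      = S * ((b1 - b4) * (b2 - b3))].
Proof. cbv zeta; rewrite /S_J /C_znum /C_wnum /Q_J /C_zden /Q_X /C_wden /cyc_sum; split; ring. Qed.

Lemma X_on_KL (b0 b1 b2 b3 b4 : F) : b0 != 0 -> b1 != 0 -> b2 != 0 -> b3 != 0 -> b4 != 0 ->
  b3 * b0 - b4 * b1 != 0 -> b4 * b1 - b0 * b2 != 0 -> b1 * b3 * b3 - b2 * b2 * b4 != 0 ->
  let lam := (b0 - b1) * (b0 - b4) * (b1 * b3 * b3 - b2 * b2 * b4) in
  let k := K_z b0 b3 b2 b4 b1 in let k' := K_w b0 b3 b2 b4 b1 in
  P_z b0 b1 b2 b3 b4 - k * Q_X b0 b1 b2 b3 b4 = lam * (L_z b1 b2 b3 b4 - k) /\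
  P_w b0 b1 b2 b3 b4 - k' * Q_X b0 b1 b2 b3 b4 = lam * (L_w b1 b2 b3 b4 - k').
Proof.
cbv zeta => *; rewrite /P_z /P_w /K_z /K_w /Q_X /L_z /L_w /cyc_sum.
by split; field; field_side.
Qed.

End PentagramFormulas.

Section IsotropicPentagram.
Variable F : fieldType.
Variables zA wA zB wB zK wK zC wC zL wL : 'I_5 -> F.
Local Notation b j k := (zB (nx j k)).

Hypothesis B_on_unit_circle : forall i, zB i * wB i = 1.
Hypothesis zB_inj : forall i j, i != j -> zB i != zB j.
Hypothesis A_on_chords : forall j,
  icross (zA j) (wA j) (zB (nx j 0)) (wB (nx j 0)) (zB (nx j 2)) (wB (nx j 2)) = 0 /\
  icross (zA j) (wA j) (zB (nx j 1)) (wB (nx j 1)) (zB (nx j 3)) (wB (nx j 3)) = 0.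
Hypothesis AAB_noncollinear : forall i,
  icross (zA i) (wA i) (zA (nx i 1)) (wA (nx i 1)) (zB (nx i 2)) (wB (nx i 2)) != 0.
Hypothesis K_center : forall i,
  idist (zK (nx i 2)) (wK (nx i 2)) (zA i) (wA i) = idist (zK (nx i 2)) (wK (nx i 2)) (zB (nx i 2)) (wB (nx i 2)) /\
  idist (zK (nx i 2)) (wK (nx i 2)) (zA (nx i 1)) (wA (nx i 1)) = idist (zK (nx i 2)) (wK (nx i 2)) (zB (nx i 2)) (wB (nx i 2)).
Hypothesis KK_neq : forall i,
  zK (nx i 3) - zK (nx i 2) != 0 /\ wK (nx i 3) - wK (nx i 2) != 0.
Hypothesis CA_neq : forall i, zC (nx i 1) != zA (nx i 1).
Hypothesis C_on_circles : forall i,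
  idist (zK (nx i 2)) (wK (nx i 2)) (zC (nx i 1)) (wC (nx i 1)) = idist (zK (nx i 2)) (wK (nx i 2)) (zA (nx i 1)) (wA (nx i 1)) /\
  idist (zK (nx i 3)) (wK (nx i 3)) (zC (nx i 1)) (wC (nx i 1)) = idist (zK (nx i 3)) (wK (nx i 3)) (zA (nx i 1)) (wA (nx i 1)).
Hypothesis CBB_noncollinear : forall i,
  icross (zC (nx i 1)) (wC (nx i 1)) (zB (nx i 2)) (wB (nx i 2)) (zB (nx i 3)) (wB (nx i 3)) != 0.
Hypothesis L_center : forall i,
  idist (zL i) (wL i) (zC (nx i 1)) (wC (nx i 1)) = idist (zL i) (wL i) (zB (nx i 3)) (wB (nx i 3)) /\
  idist (zL i) (wL i) (zB (nx i 2)) (wB (nx i 2)) = idist (zL i) (wL i) (zB (nx i 3)) (wB (nx i 3)).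

Lemma zB_neq0 i : zB i != 0.
Proof.
by apply/negP => /eqP h; move: (B_on_unit_circle i); rewrite h mul0r => /eqP; rewrite eq_sym oner_eq0.
Qed.

Lemma wB_inv i : wB i = (zB i)^-1.
Proof. by apply: (mulfI (zB_neq0 i)); rewrite B_on_unit_circle mulfV ?zB_neq0. Qed.

Lemma cyc_invariant_nx f : cyc_invariant f -> forall j,
  f (b j 0) (b j 1) (b j 2) (b j 3) (b j 4) = f (b ord0 0) (b ord0 1) (b ord0 2) (b ord0 3) (b ord0 4).
Proof.
move=> hf j; rewrite -[in LHS](nx_ord0 j); move: (val j) => n.
elim: n => [//|n IH]; rewrite nxS; move: (nx ord0 n) IH => m IH.
by rewrite !nxA -IH; reduce_indices; apply: hf.
Qed.

Lemma cyc_invariant_nx4 f : cyc_invariant f -> forall j,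
  f (b j 4) (b j 0) (b j 1) (b j 2) (b j 3) = f (b ord0 0) (b ord0 1) (b ord0 2) (b ord0 3) (b ord0 4).
Proof. by move=> hf j; rewrite -[LHS]hf; apply: cyc_invariant_nx. Qed.

Lemma zB_nx_neq j x y : (x < 5)%N -> (y < 5)%N -> x != y -> b j x != b j y.
Proof. by move=> hx hy hxy; apply: zB_inj; apply: nx_neq. Qed.

Lemma A_coords j : [/\ b j 0 * b j 2 - b j 1 * b j 3 != 0,
  zA j = chord_meet_z (b j 0) (b j 2) (b j 1) (b j 3) & wA j = chord_meet_w (b j 0) (b j 2) (b j 1) (b j 3)].
Proof.
have [h1 h2] := A_on_chords j; rewrite !wB_inv in h1 h2.
have e1 := on_chord (zB_nx_neq j (isT : (0 < 5)%N) (isT : (2 < 5)%N) isT) (zB_neq0 _) (zB_neq0 _) h1.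
have e2 := on_chord (zB_nx_neq j (isT : (1 < 5)%N) (isT : (3 < 5)%N) isT) (zB_neq0 _) (zB_neq0 _) h2.
by apply: chords_meet e1 e2; apply: zB_nx_neq.
Qed.

Lemma chord_products_neq0 j : [/\ b j 0 * b j 2 - b j 1 * b j 3 != 0, b j 1 * b j 3 - b j 2 * b j 4 != 0,
  b j 2 * b j 4 - b j 3 * b j 0 != 0, b j 3 * b j 0 - b j 4 * b j 1 != 0 &
  b j 4 * b j 1 - b j 0 * b j 2 != 0].
Proof.
have [c0 _ _] := A_coords j; have [c1 _ _] := A_coords (nx j 1); have [c2 _ _] := A_coords (nx j 2).
have [c3 _ _] := A_coords (nx j 3); have [c4 _ _] := A_coords (nx j 4).
by rewrite !nxA in c1 c2 c3 c4; reduce_indices.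
Qed.

Lemma K_coords j : zK j = K_z (b j 0) (b j 3) (b j 2) (b j 4) (b j 1) /\
                   wK j = K_w (b j 0) (b j 3) (b j 2) (b j 4) (b j 1).
Proof.
have [e1 e2] := K_center (nx j 3); have hn := AAB_noncollinear (nx j 3).
have [_ a3 a3'] := A_coords (nx j 3); have [_ a4 a4'] := A_coords (nx j 4).
rewrite !nxA in e1 e2 hn a3 a3' a4 a4'; reduce_indices.
rewrite a3 a3' a4 a4' !wB_inv in e1 e2 hn.
have [_ _ _ c3 c4] := chord_products_neq0 j.
have [k1 k2] := K_equidistant (zB_neq0 (nx j 0)) (zB_neq0 (nx j 1)) (zB_neq0 (nx j 2))
  (zB_neq0 (nx j 3)) (zB_neq0 (nx j 4)) c3 c4.
by rewrite -[j in zK j]nx0 -[j in wK j]nx0; apply: (equidistant_uniq hn e1 e2 k1 k2).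
Qed.

Lemma C_dens_neq0 j : C_zden (b j 4) (b j 0) (b j 1) (b j 2) (b j 3) != 0 /\
                      C_wden (b j 4) (b j 0) (b j 1) (b j 2) (b j 3) != 0.
Proof.
have [n1 n2] := KK_neq (nx j 4).
have [k1 k1'] := K_coords (nx j 1); have [k2 k2'] := K_coords (nx j 2).
rewrite !nxA in n1 n2 k1 k1' k2 k2'; reduce_indices.
rewrite k1 k1' k2 k2' in n1 n2.
have [c0 c1 _ _ c4] := chord_products_neq0 j.
have [e1 e2] := K_diff (zB_neq0 (nx j 0)) (zB_neq0 (nx j 1)) (zB_neq0 (nx j 2))
  (zB_neq0 (nx j 3)) (zB_neq0 (nx j 4)) c4 c1 c0.
have hp : (b j 4 * b j 1 - b j 0 * b j 2) * (b j 4 * b j 2 - b j 1 * b j 3) * (b j 0 * b j 2 - b j 1 * b j 3) != 0.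
  by nonzero.
split; apply/negP => /eqP hD.
  by move: e1; rewrite hD mulr0 => /eqP; rewrite mulf_eq0 (negbTE n2) (negbTE hp).
by move: e2; rewrite hD mulr0 => /eqP; rewrite mulf_eq0 (negbTE n1) (negbTE hp).
Qed.

Lemma C_coords j :
  zC j = C_znum (b j 4) (b j 0) (b j 1) (b j 2) (b j 3) / C_zden (b j 4) (b j 0) (b j 1) (b j 2) (b j 3) /\
  wC j = C_wnum (b j 4) (b j 0) (b j 1) (b j 2) (b j 3) / C_wden (b j 4) (b j 0) (b j 1) (b j 2) (b j 3).
Proof.
have [e1 e2] := C_on_circles (nx j 4); have hca := CA_neq (nx j 4); have [n1 n2] := KK_neq (nx j 4).
rewrite !nxA in e1 e2 hca n1 n2; reduce_indices.
have [E1 E2] := circles_meet_again n1 n2 e1 e2 hca.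
have [k1 k1'] := K_coords (nx j 1); have [k2 k2'] := K_coords (nx j 2).
have [_ a0 a0'] := A_coords j.
rewrite !nxA in k1 k1' k2 k2'; reduce_indices.
rewrite nx0 k1 k1' k2 k2' a0 a0' in E1 E2 n1 n2.
have [c0 c1 _ _ c4] := chord_products_neq0 j.
have [d1 d2] := C_dens_neq0 j.
have [F1 F2] := C_second_meet (zB_neq0 (nx j 0)) (zB_neq0 (nx j 1)) (zB_neq0 (nx j 2))
  (zB_neq0 (nx j 3)) (zB_neq0 (nx j 4)) c4 c1 c0 d1 d2.
split.
  apply: (addIr (- K_z (b j 1) (b j 4) (b j 3) (b j 0) (b j 2))).
  by apply: (mulIf n2); rewrite E1 F1.
apply: (addIr (- K_w (b j 1) (b j 4) (b j 3) (b j 0) (b j 2))).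
by apply: (mulIf n1); rewrite E2 F2.
Qed.

Lemma L_coords i : [/\ zL i = L_z (b i 1) (b i 2) (b i 3) (b i 4),
  wL i = L_w (b i 1) (b i 2) (b i 3) (b i 4) &
  b i 1 * b i 3 * b i 3 - b i 2 * b i 2 * b i 4 != 0].
Proof.
have [e1 e2] := L_center i; have hn := CBB_noncollinear i.
have [c c'] := C_coords (nx i 1); have [d1 d2] := C_dens_neq0 (nx i 1).
rewrite !nxA in c c' d1 d2; reduce_indices.
rewrite c c' !wB_inv in e1 e2 hn.
have [_ c1 _ _ _] := chord_products_neq0 i.
have [L1 L2] := L_center_eqs (zB_neq0 (nx i 0)) (zB_neq0 (nx i 1)) (zB_neq0 (nx i 2))
  (zB_neq0 (nx i 3)) (zB_neq0 (nx i 4)) d1 d2.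
by have [hT -> ->] := equidistant_homog hn e1 e2 L1 L2 c1.
Qed.

Local Notation Dz j := (C_zden (b j 4) (b j 0) (b j 1) (b j 2) (b j 3)).
Local Notation Dw j := (C_wden (b j 4) (b j 0) (b j 1) (b j 2) (b j 3)).

Definition Pz0 := P_z (b ord0 0) (b ord0 1) (b ord0 2) (b ord0 3) (b ord0 4).
Definition Pw0 := P_w (b ord0 0) (b ord0 1) (b ord0 2) (b ord0 3) (b ord0 4).
Definition QJ0 := Q_J (b ord0 0) (b ord0 1) (b ord0 2) (b ord0 3) (b ord0 4).
Definition QX0 := Q_X (b ord0 0) (b ord0 1) (b ord0 2) (b ord0 3) (b ord0 4).
Definition SJ0 := QJ0 - QX0.

Lemma C_sub_J_nx j : (zC j * QJ0 - Pz0) * Dz j = SJ0 * Dw j /\ (wC j * QJ0 - Pw0) * Dw j = SJ0 * Dz j.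
Proof.
have [c c'] := C_coords j; have [d d'] := C_dens_neq0 j.
have [e1 e2] := C_sub_J (b j 4) (b j 0) (b j 1) (b j 2) (b j 3).
move: e1 e2; rewrite /S_J !(cyc_invariant_nx4 (@P_z_invariant F), cyc_invariant_nx4 (@P_w_invariant F),
  cyc_invariant_nx4 (@Q_J_invariant F), cyc_invariant_nx4 (@Q_X_invariant F)) -/Pz0 -/Pw0 -/QJ0 -/QX0 -/SJ0 => e1 e2.
by rewrite c c'; split; [rewrite -e1 | rewrite -e2]; field.
Qed.

Definition C_diff_SJ a c := exists g,
  (zC c - zC a) * (Dz a * Dz c) = SJ0 * g /\ (wC c - wC a) * (Dw a * Dw c) = - (SJ0 * g).

Lemma C_diff_SJ_sym a c : C_diff_SJ a c -> C_diff_SJ c a.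
Proof.
move=> [g [e1 e2]]; exists (- g); split.
  by rewrite mulrN -e1; ring.
by rewrite mulrN opprK -[SJ0 * g]opprK -e2; ring.
Qed.

Lemma C_diff_SJ_nx a : C_diff_SJ a (nx a 1) /\ C_diff_SJ a (nx a 2).
Proof.
have [e1 e2 e3 e4] := C_sub (b a 0) (b a 1) (b a 2) (b a 3) (b a 4).
move: e1 e2 e3 e4.
rewrite /S_J !(cyc_invariant_nx (@Q_J_invariant F), cyc_invariant_nx (@Q_X_invariant F)) -/QJ0 -/QX0 -/SJ0.
move=> e1 e2 e3 e4.
have [c c'] := C_coords a; have [c1 c1'] := C_coords (nx a 1); have [c2 c2'] := C_coords (nx a 2).
have [d d'] := C_dens_neq0 a; have [d1 d1'] := C_dens_neq0 (nx a 1); have [d2 d2'] := C_dens_neq0 (nx a 2).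
rewrite /C_diff_SJ c c' c1 c1' c2 c2'.
rewrite !nxA in d1 d1' d2 d2' *; reduce_indices.
split.
  exists ((b a 1 - b a 2) * (b a 2 - b a 3)); split.
    by rewrite -e1; field; field_side.
  by rewrite -e2; field; field_side.
exists (- ((b a 1 - b a 4) * (b a 2 - b a 3))); split.
  by rewrite mulrN -e3; field; field_side.
by rewrite mulrN opprK -e4; field; field_side.
Qed.

Lemma C_diff_SJ_neq a c : a != c -> C_diff_SJ a c.
Proof.
case/ord5_neq_cases => ->; first [exact: (C_diff_SJ_nx a).1 | exact: (C_diff_SJ_nx a).2
  | exact: C_diff_SJ_sym (C_diff_SJ_nx c).1 | exact: C_diff_SJ_sym (C_diff_SJ_nx c).2].
Qed.

Hypothesis C_noncollinear : exists a c d, icross (zC a) (wC a) (zC c) (wC c) (zC d) (wC d) != 0.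

Lemma QJ0_neq0 : QJ0 != 0.
Proof.
have [a [c [d hcr]]] := C_noncollinear.
have [ac|hac] := eqVneq a c; first by rewrite ac icross_eq12 eqxx in hcr.
have [ad|had] := eqVneq a d; first by rewrite ad icross_eq13 eqxx in hcr.
have [g1 [h1 h2]] := C_diff_SJ_neq hac; have [g2 [h3 h4]] := C_diff_SJ_neq had.
have [da da'] := C_dens_neq0 a; have [dc dc'] := C_dens_neq0 c; have [dd dd'] := C_dens_neq0 d.
have [hc _] := C_sub_J_nx c; have [hd _] := C_sub_J_nx d.
exact: (concyclic_denom_neq0 da dc dd da' dc' dd' h1 h2 h3 h4 hc hd hcr).
Qed.

Lemma C_idist_J k : idist (Pz0 / QJ0) (Pw0 / QJ0) (zC k) (wC k) = SJ0 ^+ 2 / QJ0 ^+ 2.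
Proof.
have [d d'] := C_dens_neq0 k; have [e1 e2] := C_sub_J_nx k.
exact: (scaled_center_idist QJ0_neq0 d d' e1 e2).
Qed.

Definition KL_ratio j :=
  (b j 0 - b j 1) * (b j 0 - b j 4) * (b j 1 * b j 3 * b j 3 - b j 2 * b j 2 * b j 4).

Lemma X_on_KL_nx j : KL_ratio j != 0 /\
  Pz0 - zK j * QX0 = KL_ratio j * (zL j - zK j) /\ Pw0 - wK j * QX0 = KL_ratio j * (wL j - wK j).
Proof.
have [k k'] := K_coords j; have [l l' d3] := L_coords j.
have [_ _ _ c3 c4] := chord_products_neq0 j.
have [e1 e2] := X_on_KL (zB_neq0 (nx j 0)) (zB_neq0 (nx j 1)) (zB_neq0 (nx j 2))
  (zB_neq0 (nx j 3)) (zB_neq0 (nx j 4)) c3 c4 d3.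
move: e1 e2; rewrite !(cyc_invariant_nx (@P_z_invariant F), cyc_invariant_nx (@P_w_invariant F),
  cyc_invariant_nx (@Q_X_invariant F)) -/Pz0 -/Pw0 -/QX0 => e1 e2.
split; last by rewrite k k' l l'.
by rewrite /KL_ratio !mulf_neq0 // subr_eq0 zB_nx_neq.
Qed.

Hypothesis KL_nonparallel : exists i j, (zL i - zK i) * (wL j - wK j) - (wL i - wK i) * (zL j - zK j) != 0.

Lemma QX0_neq0 : QX0 != 0.
Proof.
have [i [j hp]] := KL_nonparallel.
have [l1 [e1 e2]] := X_on_KL_nx i; have [l2 [e3 e4]] := X_on_KL_nx j.
exact: (scaled_lines_denom_neq0 l1 l2 e1 e2 e3 e4 hp).
Qed.

Lemma X_on_line_KL k : icross (zK k) (wK k) (zL k) (wL k) (Pz0 / QX0) (Pw0 / QX0) = 0.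
Proof. by have [_ [e1 e2]] := X_on_KL_nx k; apply: (scaled_point_on_line QX0_neq0 e1 e2). Qed.

Theorem isotropic_pentagram :
  [/\ forall k, idist (Pz0 / QJ0) (Pw0 / QJ0) (zC k) (wC k) = SJ0 ^+ 2 / QJ0 ^+ 2,
      forall k, icross (zK k) (wK k) (zL k) (wL k) (Pz0 / QX0) (Pw0 / QX0) = 0 &
      icross 0 0 (Pz0 / QJ0) (Pw0 / QJ0) (Pz0 / QX0) (Pw0 / QX0) = 0].
Proof. by split; [exact: C_idist_J | exact: X_on_line_KL | exact: icross0_scale QJ0_neq0 QX0_neq0]. Qed.

End IsotropicPentagram.

Section RealPlane.
Variable R : realFieldType.
Implicit Types p q s a b c d o : point R.

Lemma dist2_eq0 p q : dist2 p q = 0 -> p = q.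
Proof.
rewrite /dist2 => /eqP; rewrite paddr_eq0 ?sqr_ge0 // => /andP[].
rewrite !sqrf_eq0 !subr_eq0 => /eqP h1 /eqP h2.
by case: p q h1 h2 => [x y] [x' y'] /= -> ->.
Qed.

Lemma collinear_swap12 p q s : collinear p q s -> collinear q p s.
Proof. rewrite /collinear => H; rewrite -[RHS]oppr0 -H; ring. Qed.
Lemma collinear_swap23 p q s : collinear p q s -> collinear p s q.
Proof. rewrite /collinear => H; rewrite -[RHS]oppr0 -H; ring. Qed.
Lemma collinear_rotl p q s : collinear p q s -> collinear q s p.
Proof. rewrite /collinear => H; rewrite -H; ring. Qed.
Lemma collinear_eq12 p s : collinear p p s.
Proof. rewrite /collinear; ring. Qed.
Lemma collinear_eq23 p s : collinear s p p.
Proof. rewrite /collinear; ring. Qed.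

Lemma collinear_trans p q r s : p <> q -> collinear p q r -> collinear p q s -> collinear p r s.
Proof.
rewrite /collinear => hpq h1 h2.
set X := (r.1 - p.1) * (s.2 - p.2) - (r.2 - p.2) * (s.1 - p.1).
have e1 : (q.1 - p.1) * X = 0.
  transitivity ((r.1 - p.1) * ((q.1 - p.1) * (s.2 - p.2) - (q.2 - p.2) * (s.1 - p.1)) - (s.1 - p.1) * ((q.1 - p.1) * (r.2 - p.2) - (q.2 - p.2) * (r.1 - p.1))); first by rewrite /X; ring.
  by rewrite h1 h2 !mulr0 subrr.
have e2 : (q.2 - p.2) * X = 0.
  transitivity ((r.2 - p.2) * ((q.1 - p.1) * (s.2 - p.2) - (q.2 - p.2) * (s.1 - p.1)) - (s.2 - p.2) * ((q.1 - p.1) * (r.2 - p.2) - (q.2 - p.2) * (r.1 - p.1))); first by rewrite /X; ring.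
  by rewrite h1 h2 !mulr0 subrr.
have [//|hX] := eqVneq X 0; exfalso.
move/eqP: e1; rewrite mulf_eq0 (negbTE hX) orbF subr_eq0 => /eqP e1.
move/eqP: e2; rewrite mulf_eq0 (negbTE hX) orbF subr_eq0 => /eqP e2.
by apply: hpq; case: p q e1 e2 {h1 h2 X hX} => [x y] [x' y'] /= -> ->.
Qed.

Lemma lines_meet_at a b c p : ~ collinear a b c -> collinear a b p -> collinear b c p -> p = b.
Proof.
rewrite /collinear => hn h1 h2.
set cr := (b.1 - a.1) * (c.2 - b.2) - (b.2 - a.2) * (c.1 - b.1).
have hcr : cr != 0 by apply/negP => /eqP e; apply: hn; rewrite -e /cr; ring.
have e1 : (p.1 - b.1) * cr = 0.
  transitivity ((c.1 - b.1) * ((b.1 - a.1) * (p.2 - a.2) - (b.2 - a.2) * (p.1 - a.1)) - (b.1 - a.1) * ((c.1 - b.1) * (p.2 - b.2) - (c.2 - b.2) * (p.1 - b.1))); first by rewrite /cr; ring.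
  by rewrite h1 h2 !mulr0 subrr.
have e2 : (p.2 - b.2) * cr = 0.
  transitivity ((c.2 - b.2) * ((b.1 - a.1) * (p.2 - a.2) - (b.2 - a.2) * (p.1 - a.1)) - (b.2 - a.2) * ((c.1 - b.1) * (p.2 - b.2) - (c.2 - b.2) * (p.1 - b.1))); first by rewrite /cr; ring.
  by rewrite h1 h2 !mulr0 subrr.
move/eqP: e1; rewrite mulf_eq0 (negbTE hcr) orbF subr_eq0 => /eqP e1.
move/eqP: e2; rewrite mulf_eq0 (negbTE hcr) orbF subr_eq0 => /eqP e2.
by case: p b e1 e2 {h1 h2 cr hcr hn} => [x y] [x' y'] /= -> ->.
Qed.

Lemma circumcenter_exists p q s : ~ collinear p q s ->
  exists o, dist2 o p = dist2 o s /\ dist2 o q = dist2 o s.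
Proof.
rewrite /collinear /dist2 => hn.
set a1 := 2 * (s.1 - p.1); set b1 := 2 * (s.2 - p.2); set c1 := s.1 ^+ 2 + s.2 ^+ 2 - p.1 ^+ 2 - p.2 ^+ 2.
set a2 := 2 * (s.1 - q.1); set b2 := 2 * (s.2 - q.2); set c2 := s.1 ^+ 2 + s.2 ^+ 2 - q.1 ^+ 2 - q.2 ^+ 2.
have hd : a1 * b2 - a2 * b1 != 0.
  apply/negP => /eqP e; apply: hn.
  have : 4 * ((q.1 - p.1) * (s.2 - p.2) - (q.2 - p.2) * (s.1 - p.1)) = 0 by rewrite -e /a1 /b1 /a2 /b2; ring.
  by move/eqP; rewrite mulf_eq0 pnatr_eq0 /= => /eqP.
exists ((c1 * b2 - c2 * b1) / (a1 * b2 - a2 * b1), (a1 * c2 - a2 * c1) / (a1 * b2 - a2 * b1)) => /=.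
by split; rewrite /a1 /b1 /c1 /a2 /b2 /c2 in hd *; field.
Qed.

Lemma lines_meet_exists a b c d : ~ parallel a b c d ->
  exists x, collinear a b x /\ collinear c d x.
Proof.
rewrite /parallel /collinear => hn.
set u1 := b.1 - a.1; set u2 := b.2 - a.2; set v1 := d.1 - c.1; set v2 := d.2 - c.2.
have hd : u1 * v2 - u2 * v1 != 0 by apply/negP => /eqP e; apply: hn.
set t := (v1 * (a.2 - c.2) - v2 * (a.1 - c.1)) / (u1 * v2 - u2 * v1).
exists (a.1 + t * u1, a.2 + t * u2) => /=; split; first by rewrite /u1 /u2; ring.
by rewrite /t /u1 /u2 /v1 /v2 in hd *; field; field_side.
Qed.

End RealPlane.

(* Isotropic coordinates centred at [O]: [isow p] is the complex conjugate of
   [isoz p] divided by [r]; when [r] is the squared radius of a circle centred at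
   [O], the points of that circle are exactly those with [isoz p * isow p = 1]. *)
Section IsotropicCoordinates.
Variables (R : realFieldType) (O : point R) (r : complex R).
Hypothesis r_neq0 : r != 0.
Implicit Types p q s a b c d : point R.

Definition isoz p : complex R := Complex (p.1 - O.1) (p.2 - O.2).
Definition isow p : complex R := Complex (p.1 - O.1) (- (p.2 - O.2)) / r.

Lemma isoz_O : isoz O = 0.
Proof. by rewrite /isoz !subrr. Qed.
Lemma isow_O : isow O = 0.
Proof. by rewrite /isow !subrr oppr0 mul0r. Qed.

Lemma isoz_inj : injective isoz.
Proof.
move=> p q [] /eqP h1 /eqP h2; move: h1 h2.
rewrite !(can2_eq (subrK _) (addrK _)) => /eqP h1 /eqP h2.
by case: p q h1 h2 => [x y] [x' y'] /=; rewrite !subrK => -> ->.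
Qed.

Lemma dist2_iso p q : ((dist2 p q)%:C)%C = r * idist (isoz p) (isow p) (isoz q) (isow q).
Proof.
rewrite /idist /isow.
transitivity ((isoz p - isoz q) * (Complex (p.1 - O.1) (- (p.2 - O.2)) - Complex (q.1 - O.1) (- (q.2 - O.2))));
  last by field.
by apply/eqP; rewrite eq_complex /=; apply/andP; split; apply/eqP; rewrite /dist2; ring.
Qed.

Lemma dist2_eq_iso p q p' q' : dist2 p q = dist2 p' q' <->
  idist (isoz p) (isow p) (isoz q) (isow q) = idist (isoz p') (isow p') (isoz q') (isow q').
Proof.
split => [H|H]; first by apply: (mulfI r_neq0); rewrite -!dist2_iso H.
by move: (dist2_iso p q); rewrite H -dist2_iso => -[].
Qed.

Lemma parallel_iso a b c d : parallel a b c d <->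
  (isoz b - isoz a) * (isow d - isow c) - (isow b - isow a) * (isoz d - isoz c) = 0.
Proof.
set e := (b.1 - a.1) * (d.2 - c.2) - (b.2 - a.2) * (d.1 - c.1).
have -> : (isoz b - isoz a) * (isow d - isow c) - (isow b - isow a) * (isoz d - isoz c)
          = Complex 0 (- (2%:R * e)) / r.
  transitivity ((isoz b - isoz a) * (Complex (d.1 - O.1) (- (d.2 - O.2)) - Complex (c.1 - O.1) (- (c.2 - O.2))) / r
     - (Complex (b.1 - O.1) (- (b.2 - O.2)) - Complex (a.1 - O.1) (- (a.2 - O.2))) * (isoz d - isoz c) / r).
    by rewrite /isow; field.
  rewrite -mulrBl; congr (_ / _).
  by apply/eqP; rewrite eq_complex /=; apply/andP; split; apply/eqP; rewrite /e; ring.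
rewrite /parallel -/e; split => [->|H]; first by rewrite mulr0 oppr0 mul0r.
have : Complex 0 (- (2%:R * e)) = (0 : complex R) by apply: (mulIf (invr_neq0 r_neq0)); rewrite H mul0r.
by case => /eqP; rewrite oppr_eq0 mulf_eq0 pnatr_eq0 => /eqP.
Qed.

Lemma collinear_iso p q s :
  collinear p q s <-> icross (isoz p) (isow p) (isoz q) (isow q) (isoz s) (isow s) = 0.
Proof. exact: parallel_iso. Qed.

Lemma iso_sub_neq0 p q : p <> q -> isoz p - isoz q != 0 /\ isow p - isow q != 0.
Proof.
move=> hpq; have hd : dist2 p q != 0 by apply/eqP => /dist2_eq0.
have : r * idist (isoz p) (isow p) (isoz q) (isow q) != 0.
  by rewrite -dist2_iso; apply: contra hd => /eqP [] ->.
by rewrite /idist !mulf_eq0 !negb_or => /andP[_ /andP[-> ->]].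
Qed.

End IsotropicCoordinates.

Lemma circles_meet_twice (R : realFieldType) (k l a c c' : point R) : k <> l -> c <> a -> c' <> a ->
  dist2 k c = dist2 k a -> dist2 l c = dist2 l a ->
  dist2 k c' = dist2 k a -> dist2 l c' = dist2 l a -> c = c'.
Proof.
move=> hkl hca hc'a h1 h2 h3 h4.
have r_neq0 : (1 : complex R) != 0 := oner_neq0 _.
have iso_neq p q : p <> q -> isoz a p != isoz a q by move=> hpq; apply: contra_not_neq hpq => /isoz_inj.
have [n1 n2] := iso_sub_neq0 a r_neq0 (nesym hkl).
have [E _] := circles_meet_again n1 n2 (proj1 (dist2_eq_iso a r_neq0 _ _ _ _) h1)
  (proj1 (dist2_eq_iso a r_neq0 _ _ _ _) h2) (iso_neq _ _ hca).
have [E' _] := circles_meet_again n1 n2 (proj1 (dist2_eq_iso a r_neq0 _ _ _ _) h3)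
  (proj1 (dist2_eq_iso a r_neq0 _ _ _ _) h4) (iso_neq _ _ hc'a).
by apply: (isoz_inj (O := a)); apply: (addIr (- isoz a k)); apply: (mulIf n2); rewrite E E'.
Qed.

Section MiquelPentagram.
Local Unset Implicit Arguments.
Variables (R : realFieldType) (A B K C L : 'I_5 -> point R) (O : point R).
Hypothesis A_neq : forall i, A i <> A (nx i 1).
Hypothesis B_meet : forall i, collinear (A i) (A (nx i 1)) (B (nx i 3)) /\
                              collinear (A (nx i 2)) (A (nx i 3)) (B (nx i 3)).
Hypothesis AAB_noncollinear : forall i, ~ collinear (A i) (A (nx i 1)) (B (nx i 2)).
Hypothesis K_center : forall i,
  dist2 (K (nx i 2)) (A i) = dist2 (K (nx i 2)) (B (nx i 2)) /\
  dist2 (K (nx i 2)) (A (nx i 1)) = dist2 (K (nx i 2)) (B (nx i 2)).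
Hypothesis K_neq : forall i, K (nx i 2) <> K (nx i 3).
Hypothesis C_neq_A : forall i, C (nx i 1) <> A (nx i 1).
Hypothesis C_on_circles : forall i,
  dist2 (K (nx i 2)) (C (nx i 1)) = dist2 (K (nx i 2)) (A (nx i 1)) /\
  dist2 (K (nx i 3)) (C (nx i 1)) = dist2 (K (nx i 3)) (A (nx i 1)).
Hypothesis CBB_noncollinear : forall i, ~ collinear (C (nx i 1)) (B (nx i 2)) (B (nx i 3)).
Hypothesis L_center : forall i,
  dist2 (L i) (C (nx i 1)) = dist2 (L i) (B (nx i 3)) /\
  dist2 (L i) (B (nx i 2)) = dist2 (L i) (B (nx i 3)).
Hypothesis B_concyclic : forall i j, dist2 O (B i) = dist2 O (B j).
Hypothesis C_noncollinear : exists i j k, ~ collinear (C i) (C j) (C k).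
Hypothesis KL_nonparallel : exists i j, ~ parallel (K i) (L i) (K j) (L j).

Lemma B_neq_nx1 i : B i <> B (nx i 1).
Proof.
move=> e; apply: (CBB_noncollinear (nx i 3)); rewrite !nxA; reduce_indices.
by rewrite nx0 e; apply: collinear_eq23.
Qed.

Lemma A_on_chords j : collinear (A j) (B (nx j 0)) (B (nx j 2)) /\
                      collinear (A j) (B (nx j 1)) (B (nx j 3)).
Proof.
rewrite -[j in A j]nx0; split.
  have h1 := (B_meet (nx j 4)).1; have h2 := (B_meet (nx j 2)).2; have hne := A_neq (nx j 4).
  rewrite !nxA in h1 h2 hne; reduce_indices.
  apply: collinear_swap23; apply: (collinear_trans (nesym hne)); exact: collinear_swap12.
have h1 := (B_meet (nx j 0)).1; have h2 := (B_meet (nx j 3)).2; have hne := A_neq (nx j 0).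
rewrite !nxA in h1 h2 hne; reduce_indices.
exact: (collinear_trans hne h2 h1).
Qed.

(* If B_{i+1} = B_{i+3}, this point is A_{i+3}; then both circles through
   A_{i+2} also pass through A_{i+3}, so C_{i+2} = A_{i+3} = B_{i+3}. *)
Lemma B_neq_nx13 i : B (nx i 1) <> B (nx i 3).
Proof.
move=> e.
have hnc : ~ collinear (A (nx i 2)) (A (nx i 3)) (A (nx i 4)).
  move=> hc; apply: (AAB_noncollinear (nx i 2)).
  have h1 := (B_meet (nx i 1)).2; have hne := A_neq (nx i 3).
  rewrite !nxA in h1 hne *; reduce_indices.
  exact/collinear_swap12/(collinear_trans hne (collinear_rotl hc) h1).
have BA3 : B (nx i 3) = A (nx i 3).
  apply: (lines_meet_at hnc); first exact: (B_meet i).2.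
  by have := (B_meet (nx i 3)).1; rewrite !nxA -e; reduce_indices.
have [k1 k2] := K_center (nx i 1); have [k3 k4] := K_center (nx i 2).
have [c1 c2] := C_on_circles (nx i 1); have hkk := K_neq (nx i 1).
have hca := C_neq_A (nx i 1); have ha := A_neq (nx i 2).
rewrite !nxA in k1 k2 k3 k4 c1 c2 hkk hca ha; reduce_indices.
have CA3 : C (nx i 2) = A (nx i 3).
  apply: (circles_meet_twice hkk hca (nesym ha) c1 c2); first by rewrite -BA3 k2.
  by rewrite k3 k4.
apply: (CBB_noncollinear (nx i 1)); rewrite !nxA; reduce_indices.
by rewrite CA3 -BA3; apply: collinear_eq12.
Qed.

Lemma B_neq_nx2 i : B i <> B (nx i 2).
Proof. by have := B_neq_nx13 (nx i 4); rewrite !nxA; reduce_indices; rewrite nx0. Qed.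

Lemma B_inj i j : i != j -> B i <> B j.
Proof.
case/ord5_neq_cases => ->; [exact: B_neq_nx1 | exact: B_neq_nx2 | | ].
  by move=> e; apply: (B_neq_nx1 j).
by move=> e; apply: (B_neq_nx2 j).
Qed.

Lemma radius_neq0 : dist2 O (B ord0) != 0.
Proof.
apply/eqP => h0; have BO i : B i = O by apply/esym/dist2_eq0; rewrite (B_concyclic i ord0).
by apply: (B_neq_nx1 ord0); rewrite !BO.
Qed.

Let r : complex R := ((dist2 O (B ord0))%:C)%C.
Local Notation zc p := (isoz O p).
Local Notation wc p := (isow O r p).
Let zB i := zc (B i).
Let Jz := Pz0 zB / QJ0 zB.
Let Jw := Pw0 zB / QJ0 zB.
Let Xz := Pz0 zB / QX0 zB.
Let Xw := Pw0 zB / QX0 zB.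

Lemma r_neq0 : r != 0.
Proof. by apply: contra radius_neq0 => /eqP [] ->. Qed.

Lemma B_on_unit_circle i : zc (B i) * wc (B i) = 1.
Proof.
have := dist2_iso O r_neq0 O (B i).
rewrite (B_concyclic i ord0) -/r isoz_O isow_O /idist !sub0r mulrNN => e.
by apply: (mulfI r_neq0); rewrite -e mulr1.
Qed.

Lemma pentagram_iso :
  [/\ forall k, idist Jz Jw (zc (C k)) (wc (C k)) = SJ0 zB ^+ 2 / QJ0 zB ^+ 2,
      forall k, icross (zc (K k)) (wc (K k)) (zc (L k)) (wc (L k)) Xz Xw = 0 &
      icross 0 0 Jz Jw Xz Xw = 0].
Proof.
have col_iso := collinear_iso O r_neq0; have dist_iso := dist2_eq_iso O r_neq0.
apply: (@isotropic_pentagram _ (fun i => zc (A i)) (fun i => wc (A i)) zB (fun i => wc (B i))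
  (fun i => zc (K i)) (fun i => wc (K i)) (fun i => zc (C i)) (fun i => wc (C i))
  (fun i => zc (L i)) (fun i => wc (L i))) => /=.
- exact: B_on_unit_circle.
- by move=> i j /B_inj hij; apply: contra_not_neq hij => /isoz_inj.
- by move=> j; have [h1 h2] := A_on_chords j; split; apply/col_iso.
- by move=> i; apply/eqP => /col_iso; apply: AAB_noncollinear.
- by move=> i; have [h1 h2] := K_center i; split; apply/dist_iso.
- by move=> i; apply: (iso_sub_neq0 O r_neq0) => e; apply: (K_neq i (esym e)).
- by move=> i; apply: contra_not_neq (C_neq_A i) => /isoz_inj.
- by move=> i; have [h1 h2] := C_on_circles i; split; apply/dist_iso.
- by move=> i; apply/eqP => /col_iso; apply: CBB_noncollinear.
- by move=> i; have [h1 h2] := L_center i; split; apply/dist_iso.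
- by have [a [c [d h]]] := C_noncollinear; exists a, c, d; apply/eqP => /col_iso.
- by have [i [j h]] := KL_nonparallel; exists i, j; apply/eqP => /(parallel_iso O r_neq0).
Qed.

Lemma iso_center {J : point R} {a c d : 'I_5} : ~ collinear (C a) (C c) (C d) ->
  dist2 J (C a) = dist2 J (C d) -> dist2 J (C c) = dist2 J (C d) -> zc J = Jz /\ wc J = Jw.
Proof.
move=> hn e1 e2; have [hJ _ _] := pentagram_iso.
have hcr : icross (zc (C a)) (wc (C a)) (zc (C c)) (wc (C c)) (zc (C d)) (wc (C d)) != 0.
  by apply/eqP => /(collinear_iso O r_neq0).
apply: (equidistant_uniq hcr); try exact: etrans (hJ _) (esym (hJ d)).
  exact/(dist2_eq_iso O r_neq0).
exact/(dist2_eq_iso O r_neq0).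
Qed.

Lemma iso_meet {X : point R} {i j : 'I_5} : ~ parallel (K i) (L i) (K j) (L j) ->
  collinear (K i) (L i) X -> collinear (K j) (L j) X -> zc X = Xz /\ wc X = Xw.
Proof.
move=> hp c1 c2; have [_ hX _] := pentagram_iso.
have hp' : (zc (L i) - zc (K i)) * (wc (L j) - wc (K j)) - (wc (L i) - wc (K i)) * (zc (L j) - zc (K j)) != 0.
  by apply/eqP => /(parallel_iso O r_neq0).
by apply: (lines_meet_uniq hp' _ _ (hX i) (hX j)); apply/(collinear_iso O r_neq0).
Qed.

Lemma C_concyclic : exists J, forall i j, dist2 J (C i) = dist2 J (C j).
Proof.
have [a [c [d hn]]] := C_noncollinear; have [J [e1 e2]] := circumcenter_exists hn.
exists J => i j; apply/(dist2_eq_iso O r_neq0).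
have [hJ _ _] := pentagram_iso; have [-> ->] := iso_center hn e1 e2.
by rewrite !hJ.
Qed.

Lemma KL_concurrent : exists X, forall i, collinear (K i) (L i) X.
Proof.
have [i [j hp]] := KL_nonparallel; have [X [c1 c2]] := lines_meet_exists hp.
exists X => k; apply/(collinear_iso O r_neq0).
have [_ hX _] := pentagram_iso; have [-> ->] := iso_meet hp c1 c2.
exact: hX.
Qed.

Lemma O_J_X_collinear J X : (forall i j, dist2 J (C i) = dist2 J (C j)) ->
  (forall i, collinear (K i) (L i) X) -> collinear O J X.
Proof.
move=> hJ hX; have [a [c [d hn]]] := C_noncollinear; have [i [j hp]] := KL_nonparallel.
apply/(collinear_iso O r_neq0); rewrite isoz_O isow_O.
have [-> ->] := iso_center hn (hJ a d) (hJ c d); have [-> ->] := iso_meet hp (hX i) (hX j).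
by have [_ _ ->] := pentagram_iso.
Qed.

End MiquelPentagram.

Theorem theorem2p3 (R : realFieldType)
  (A B K C L : 'I_5 -> point R) (O : point R) :
  (* B_{i+3} = intersection of lines A_iA_{i+1} and A_{i+2}A_{i+3},
     these lines existing and being non-parallel *)
  (forall i, A i <> A (nx i 1)) ->
  (forall i, ~ parallel (A i) (A (nx i 1)) (A (nx i 2)) (A (nx i 3))) ->
  (forall i, collinear (A i) (A (nx i 1)) (B (nx i 3)) /\
             collinear (A (nx i 2)) (A (nx i 3)) (B (nx i 3))) ->
  (* K_{i+2} = circumcenter of the (nondegenerate) triangle A_i A_{i+1} B_{i+2} *)
  (forall i, ~ collinear (A i) (A (nx i 1)) (B (nx i 2))) ->
  (forall i, dist2 (K (nx i 2)) (A i) = dist2 (K (nx i 2)) (B (nx i 2)) /\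
             dist2 (K (nx i 2)) (A (nx i 1)) = dist2 (K (nx i 2)) (B (nx i 2))) ->
  (* C_{i+1} = second intersection (other than A_{i+1}) of the distinct
     circles (A_i A_{i+1} B_{i+2}) and (A_{i+1} A_{i+2} B_{i+3}),
     whose centers are K_{i+2} and K_{i+3} *)
  (forall i, K (nx i 2) <> K (nx i 3)) ->
  (forall i, C (nx i 1) <> A (nx i 1)) ->
  (forall i, dist2 (K (nx i 2)) (C (nx i 1)) = dist2 (K (nx i 2)) (A (nx i 1)) /\
             dist2 (K (nx i 3)) (C (nx i 1)) = dist2 (K (nx i 3)) (A (nx i 1))) ->
  (* L_i = circumcenter of the (nondegenerate) triangle C_{i+1} B_{i+2} B_{i+3} *)
  (forall i, ~ collinear (C (nx i 1)) (B (nx i 2)) (B (nx i 3))) ->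
  (forall i, dist2 (L i) (C (nx i 1)) = dist2 (L i) (B (nx i 3)) /\
             dist2 (L i) (B (nx i 2)) = dist2 (L i) (B (nx i 3))) ->
  (* B_1, ..., B_5 lie on a circle with center O *)
  (forall i j, dist2 O (B i) = dist2 O (B j)) ->
  (* nondegeneracy: the lines K_iL_i exist, the circle through the C_i is
     determined by them, and the common point X of the lines K_iL_i is
     well defined (not all these lines are parallel/equal) *)
  (forall i, K i <> L i) ->
  (exists i j k, ~ collinear (C i) (C j) (C k)) ->
  (exists i j, ~ parallel (K i) (L i) (K j) (L j)) ->
  (* conclusion: the C_i are concyclic (center J), the lines K_iL_i are
     concurrent (at X), and O, J, X are collinear *)
  (exists J : point R, forall i j, dist2 J (C i) = dist2 J (C j)) /\
  (exists X : point R, forall i, collinear (K i) (L i) X) /\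
  (forall J X : point R,
     (forall i j, dist2 J (C i) = dist2 J (C j)) ->
     (forall i, collinear (K i) (L i) X) ->
     collinear O J X).
Proof.
(* The B_i are given. *)
move=> A_neq _ B_meet AAB_nc K_center K_neq C_neq_A C_on_circles CBB_nc L_center
  B_concyclic _ C_nc KL_np.
split; [exact: C_concyclic | split; [exact: KL_concurrent | exact: O_J_X_collinear]].
Qed.
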